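(* Let $\sigma_0$ be uniform on $Q$ and $m(k)=\mathbf E[\sigma_0^k]$ for $k\in\{0,1,\dots\}$. Let $v_1,\dots,v_k\in\mathsf V$ be distinct and $r_1,\dots,r_k\in\{0,1,\dots\}$. Then $$\mathbf E\big[\sigma(v_1)^{r_1}\cdots\sigma(v_k)^{r_k}\big]=\sum_{\mathcal P}\mathbf P(\pi(\omega)=\mathcal P)\prod_{A\in\mathcal P}m\Big(\sum_{v_j\in A}r_j\Big),$$ where the sum runs over all partitions $\mathcal P$ of $\{v_1,\dots,v_k\}$ such that $\sum_{v_j\in A}r_j$ is even for every $A\in\mathcal P$. In particular $\mathbf E[\sigma(v_1)\sigma(v_2)]=m(2)\,\mathbf P(v_1\leftrightarrow v_2)$, where $\{v_1\leftrightarrow v_2\}$ is the event that $v_1$ and $v_2$ lie in the same cluster of $\omega$.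
   Context: Let $M$ be a compact orientable surface without boundary, or the plane. Let $\mathsf G=(\mathsf V,\mathsf E)$ be a finite connected graph embedded in $M$ with all faces topological discs, and $\mathsf G^*=(\mathsf U,\mathsf E^* )$ its embedded dual ($\mathsf U$ = faces of $\mathsf G$); $e^*$ is the dual edge crossing $e$, $\xi^*=\{e^*:e\in\xi\}$. Fix integers $q,q'\ge1$, finite $Q\subset\mathbb R$, $Q'\subset\mathbb C$ with $Q=-Q$, $Q'=-Q'$, $|Q|=q$, $|Q'|=q'$, and $a,b\in(0,1]$. For $\sigma:\mathsf V\to Q$, $\eta(\sigma)\subseteq\mathsf E^*$ is the set of $e^*$ whose primal $e$ has endpoints with different $\sigma$-values; for $\sigma':\mathsf U\to Q'$, $\eta(\sigma')\subseteq\mathsf E$ is the set of $e$ whose dual $e^*$ has endpoints with different $\sigma'$-values. $\mathbf P(\sigma,\sigma')\propto a^{|\eta(\sigma')|}b^{|\eta(\sigma)|}$ on $\Sigma=\{(\sigma,\sigma'):\eta(\sigma)^*\cap\eta(\sigma')=\emptyset\}$. Percolation: given $(\sigma,\sigma')$, every edge of $\eta(\sigma')$ and every dual edge of $\eta(\sigma)$ is open; for each pair $(e,e^* )$ with $e\notin\eta(\sigma')$, $e^*\notin\eta(\sigma)$, independently: if $a+b\le1$, ($e$ open, $e^*$ closed) w.p. $a$, ($e$ closed, $e^*$ open) w.p. $b$, both open w.p. $1-a-b$; if $a+b\ge1$, ($e$ open, $e^*$ closed) w.p. $1-b$, ($e$ closed, $e^*$ open) w.p. $1-a$, both closed w.p.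 $a+b-1$. $\omega$ is the set of open primal edges; $\mathbf P,\mathbf E$ refer to the joint law. Clusters of $\omega$ are the connected components of $(\mathsf V,\omega)$, and $\pi(\omega)$ is the partition of $\{v_1,\dots,v_k\}$ induced by the clusters of $\omega$. *)

From HB Require Import structures.
From mathcomp Require Import all_boot all_order all_algebra.
From mathcomp Require Import perm finmap.
From mathcomp Require Import complex.
From mathcomp Require Import reals.

Set Implicit Arguments.
Unset Strict Implicit.
Unset Printing Implicit Defensive.

Import Order.TTheory GRing.Theory Num.Theory.
Local Open Scope ring_scope.

(* A connected graph cellularly embedded in a compact orientable surface,
   encoded (Heffter-Edmonds) as a combinatorial map / rotation system:
   darts D, fixed-point-free involution alpha (the two half-edges of an
   edge), rotation rho around vertices; faces are the orbits of rho o alpha. *)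
Record cmap := CMap {
  dart : finType;
  alpha : {perm dart};
  rho : {perm dart};
  vtx : finType;
  fce : finType;
  edg : finType;
  vert : dart -> vtx;
  face : dart -> fce;
  edge : dart -> edg;
  alpha_invol : forall d, alpha (alpha d) = d;
  alpha_nofix : forall d, alpha d != d;
  vert_surj : forall x, exists d, vert d = x;
  face_surj : forall f, exists d, face d = f;
  edge_surj : forall e, exists d, edge d = e;
  vertE : forall d d', (vert d = vert d') <-> fconnect rho d d';
  faceE : forall d d', (face d = face d') <-> fconnect (fun x => rho (alpha x)) d d';
  edgeE : forall d d', (edge d = edge d') <-> (d' = d \/ d' = alpha d);
  cmap_connected : forall d d',
      connect (fun x y => (y == rho x) || (y == alpha x)) d d'
}.

Arguments alpha {c}.
Arguments rho {c}.
Arguments vert {c}.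
Arguments face {c}.
Arguments edge {c}.

Section Model.
Variable R : realType.
Variable G : cmap.
Variable Q : {fset R}.
Variable Q' : {fset R[i]}.
Variables a b : R.

Local Notation V := (vtx G).
Local Notation U := (fce G).
Local Notation E := (edg G).

(* primal edge e has endpoints with different sigma-values: e^* in eta(sigma) *)
Definition eta_s (s : {ffun V -> Q}) : {set E} :=
  [set e | [exists d, (edge d == e) && (val (s (vert d)) != val (s (vert (alpha d))))]].

(* dual edge e^* has endpoints (faces on the two sides of e) with different
   sigma'-values: e in eta(sigma') *)
Definition eta_s' (s' : {ffun U -> Q'}) : {set E} :=
  [set e | [exists d, (edge d == e) && (val (s' (face d)) != val (s' (face (alpha d))))]].

Definition compatible (s : {ffun V -> Q}) (s' : {ffun U -> Q'}) : bool :=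
  [disjoint eta_s s & eta_s' s'].

(* conditional probability that the pair (e, dual e) is in state
   (x = e open, y = e^* open), given (sigma, sigma') *)
Definition edge_kernel (s : {ffun V -> Q}) (s' : {ffun U -> Q'}) (e : E)
    (x y : bool) : R :=
  if e \in eta_s' s' then (if x && ~~ y then 1 else 0)
  else if e \in eta_s s then (if ~~ x && y then 1 else 0)
  else if a + b <= 1 then
    match x, y with
    | true, false => a | false, true => b
    | true, true => 1 - a - b | false, false => 0 end
  else
    match x, y with
    | true, false => 1 - b | false, true => 1 - a
    | false, false => a + b - 1 | true, true => 0 end.

Definition spin_weight (s : {ffun V -> Q}) (s' : {ffun U -> Q'}) : R :=
  if compatible s s' then a ^+ #|eta_s' s'| * b ^+ #|eta_s s| else 0.

(* unnormalised joint weight of (sigma, sigma', omega, omega dual), where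
   omega = open primal edges, omegad = edges whose dual is open *)
Definition joint_weight (s : {ffun V -> Q}) (s' : {ffun U -> Q'})
    (w wd : {set E}) : R :=
  spin_weight s s' * \prod_(e : E) edge_kernel s s' e (e \in w) (e \in wd).

Definition partition_fn : R :=
  \sum_(s : {ffun V -> Q}) \sum_(s' : {ffun U -> Q'}) spin_weight s s'.

Definition Exp (F : {ffun V -> Q} -> {set E} -> R) : R :=
  (\sum_(s : {ffun V -> Q}) \sum_(s' : {ffun U -> Q'})
     \sum_(w : {set E}) \sum_(wd : {set E})
        joint_weight s s' w wd * F s w) / partition_fn.

Definition Prob (A : {ffun V -> Q} -> {set E} -> bool) : R :=
  Exp (fun s w => if A s w then 1 else 0).

Definition open_adj (w : {set E}) : rel V :=
  fun x y => [exists d, [&& edge d \in w, vert d == x & vert (alpha d) == y]].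

Definition same_cluster (w : {set E}) (x y : V) : bool :=
  connect (open_adj w) x y.

Definition cluster_partition (w : {set E}) (A : {set V}) : {set {set V}} :=
  [set [set x in A | same_cluster w y x] | y in A].

Definition moment (k : nat) : R :=
  (\sum_(x : Q) (val x) ^+ k) / (#|{: Q}|%:R).

End Model.

Arguments Exp {R} G Q Q' a b F.
Arguments Prob {R} G Q Q' a b A.

From Pilot Require Import Defs.
From HB Require Import structures.
From mathcomp Require Import all_boot all_order all_algebra.
From mathcomp Require Import perm finmap.
From mathcomp Require Import complex.
From mathcomp Require Import reals.
From mathcomp Require Import ring.
Import Order.TTheory GRing.Theory Num.Theory.
Local Open Scope ring_scope.
Set Implicit Arguments.
Unset Strict Implicit.
Unset Printing Implicit Defensive.

(** Summing out the states of the dual edges, the joint weight of (sigma, sigma', omega)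
    becomes [1(omega avoids eta(sigma)) * K(sigma', omega)] with [K] independent of sigma.
    Hence, given omega, sigma is uniform among the spin configurations that are constant
    on the clusters of omega, i.e. it assigns independent uniform values of [Q] to the
    clusters.  The conditional expectation of a spin monomial is then the product over
    clusters of [m] of the total exponent in the cluster; it vanishes as soon as some
    cluster carries an odd total exponent because [Q = -Q], and averaging over omega
    gives the formula. *)

Section BigopFacts.
Variable R : comNzRingType.

Lemma sum_subsets_prod (T : finType) (g : T -> bool -> R) :
  \sum_(W : {set T}) \prod_(e : T) g e (e \in W) = \prod_(e : T) (g e true + g e false).
Proof.
under [RHS]eq_bigr => e _ do rewrite -big_bool.
rewrite bigA_distr_bigA (reindex (fun W : {set T} => [ffun e => e \in W])) /=.
  by apply: eq_bigr => W _; apply: eq_bigr => e _; rewrite ffunE.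
apply: onW_bij; exists (fun f : {ffun T -> bool} => [set e | f e]) => [W|f].
  by apply/setP => e; rewrite inE ffunE.
by apply/ffunP => e; rewrite ffunE inE.
Qed.

Lemma disjoint_indicatorE (T : finType) (A B : {set T}) :
  (if [disjoint A & B] then 1 else 0 : R) =
  \prod_(e : T) (if (e \in A) && (e \in B) then 0 else 1).
Proof.
case: ifP => [AB | /negbT /pred0Pn[e /andP /= [eA eB]]]; last first.
  by rewrite (bigD1 e) //= eA eB mul0r.
by rewrite big1 // => e _; case: ifP => // /andP[/(disjointFr AB) ->].
Qed.

(* [y0] only serves to extend functions by a constant off the fixed points of [f]. *)
Lemma sum_ffun_retract (T S : finType) (f : T -> T) (y0 : S) (F : T -> S -> R) :
  (forall x, f (f x) = f x) ->
  \sum_(g : {ffun T -> S} | [forall x, g x == g (f x)]) \prod_(x | f x == x) F x (g x)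
  = \prod_(x | f x == x) \sum_(y : S) F x y.
Proof.
move=> fK.
pose ext (h : {ffun T -> S}) : {ffun T -> S} := [ffun x => h (f x)].
pose cut (g : {ffun T -> S}) : {ffun T -> S} :=
  [ffun x => if f x == x then g x else y0].
pose F' x y : R := if f x == x then F x y else (y == y0)%:R.
have F'E (h : {ffun T -> S}) :
    \prod_x F' x (h x) = (cut h == h)%:R * \prod_(x | f x == x) F x (h x).
  have [cut_h | neq] := eqVneq (cut h) h.
    rewrite mul1r [RHS]big_mkcond; apply: eq_bigr => x _; rewrite /F'.
    case: ifP => // fx.
    by move/ffunP/(_ x): cut_h; rewrite ffunE fx => <-; rewrite eqxx.
  have /existsP[x] : [exists x, cut h x != h x].
    by apply: contraNT neq => /existsPn eqx; apply/eqP/ffunP => x; apply/eqP/negbNE.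
  rewrite ffunE mul0r.
  case: ifP => [_|fx y0h]; first by rewrite eqxx.
  by rewrite (bigD1 x) //= /F' fx eq_sym (negbTE y0h) mul0r.
rewrite (reindex_onto ext cut); last first.
  move=> g /forallP gf; apply/ffunP => x.
  by rewrite !ffunE fK eqxx -(eqP (gf x)).
have -> : \prod_(x | f x == x) \sum_y F x y = \prod_x \sum_y F' x y.
  rewrite [RHS](bigID (fun x => f x == x)) /= [X in _ * X]big1 ?mulr1.
    by apply: eq_bigr => x fx; apply: eq_bigr => y _; rewrite /F' fx.
  move=> x /negbTE fx; rewrite (bigD1 y0) //= big1 ?addr0 /F' fx ?eqxx //.
  by move=> y /negbTE ->.
rewrite bigA_distr_bigA /= big_mkcond; apply: eq_bigr => h _.
rewrite F'E.
have -> : [forall x, ext h x == ext h (f x)] by apply/forallP => x; rewrite !ffunE fK.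
have -> : cut (ext h) = cut h by apply/ffunP => x; rewrite !ffunE; case: eqP => // ->.
case: eqP => /= [cut_h|]; last by rewrite mul0r.
by rewrite mul1r; apply: eq_bigr => x fx; rewrite ffunE (eqP fx).
Qed.

End BigopFacts.

Section Clusters.
Variable G : cmap.
Local Notation V := (vtx G).
Local Notation E := (edg G).
Implicit Types (w : {set E}) (x y : V).

Lemma edge_alpha (d : dart G) : edge (alpha d) = edge d.
Proof. by symmetry; apply/(edgeE d (alpha d)); right. Qed.

Lemma open_adj_sym w : symmetric (open_adj w).
Proof.
suff adjC x y : open_adj w x y -> open_adj w y x by move=> x y; apply/idP/idP => /adjC.
case/existsP => d /and3P[dw dx dy]; apply/existsP; exists (alpha d).
by rewrite edge_alpha dw dy alpha_invol dx.
Qed.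

Lemma open_adj_connect_sym w : connect_sym (open_adj w).
Proof. exact/sym_connect_sym/open_adj_sym. Qed.

Definition cluster_root w x : V := fingraph.root (open_adj w) x.

Lemma same_cluster_refl w x : same_cluster w x x.
Proof. exact: connect0. Qed.

Lemma cluster_root_idem w x : cluster_root w (cluster_root w x) = cluster_root w x.
Proof. exact/root_root/open_adj_connect_sym. Qed.

Lemma same_clusterP w x y :
  reflect (cluster_root w x = cluster_root w y) (same_cluster w x y).
Proof. exact/fingraph.rootP/open_adj_connect_sym. Qed.

Lemma cluster_partitionP w (A : {set V}) : partition (cluster_partition w A) A.
Proof.
apply: equivalence_partitionP => x y z _ _ _; split; first exact: same_cluster_refl.
by move=> xy; rewrite /same_cluster (same_connect (open_adj_connect_sym w) xy).
Qed.

End Clusters.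

Section SpinsGivenClusters.
Variable R : realType.
Variable G : cmap.
Variable Q : {fset R}.
Variable Q' : {fset R[i]}.
Variables a b : R.
Local Notation V := (vtx G).
Local Notation U := (fce G).
Local Notation E := (edg G).
Local Notation Exp := (Exp G Q Q' a b).
Implicit Types (w : {set E}) (s : {ffun V -> Q}).

Lemma disjoint_eta_sE w s :
  [disjoint w & eta_s s] = [forall x, s x == s (cluster_root w x)].
Proof.
apply/idP/forallP => [wS x | sS].
  have s_adj : closed (open_adj w) [pred y | s y == s x].
    move=> y z /existsP[d /and3P[dw /eqP<- /eqP<-]] /=; congr (_ == _).
    have : edge d \notin eta_s s by rewrite (disjointFr wS dw).
    by rewrite inE negb_exists => /forallP/(_ d); rewrite eqxx negbK => /eqP/val_inj.
  by have := closed_connect s_adj (connect_root _ x); rewrite !inE eqxx eq_sym => <-.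
apply/pred0P => e /=; apply/negbTE/andP => -[ew]; rewrite inE => /existsP[d /andP[/eqP de]].
rewrite (eqP (sS _)) (eqP (sS (vert (alpha d)))).
suff /same_clusterP -> : same_cluster w (vert d) (vert (alpha d)) by rewrite eqxx.
by apply/connect1/existsP; exists d; rewrite de ew !eqxx.
Qed.

Definition spin_fits s w : R := if [disjoint w & eta_s s] then 1 else 0.

Definition omega_weight (s' : {ffun U -> Q'}) w : R :=
  \prod_(e : E) (if e \in w then (if e \in eta_s' s' then a else 1 - b)
                 else (if e \in eta_s' s' then 0 else b)).

Lemma spin_weightE s (s' : {ffun U -> Q'}) :
  spin_weight a b s s' =
  \prod_(e : E) ((if (e \in eta_s s) && (e \in eta_s' s') then 0 else 1) *
                 (if e \in eta_s' s' then a else 1) * (if e \in eta_s s then b else 1)).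
Proof.
rewrite /spin_weight /compatible !big_split /= -disjoint_indicatorE -!big_mkcond /=.
by rewrite !prodr_const; case: ifP => _; rewrite ?mul1r ?mul0r.
Qed.

Lemma sum_dual_joint_weight s (s' : {ffun U -> Q'}) w :
  \sum_(wd : {set E}) joint_weight a b s s' w wd = spin_fits s w * omega_weight s' w.
Proof.
pose g e c := (if (e \in eta_s s) && (e \in eta_s' s') then 0 else 1) *
  (if e \in eta_s' s' then a else 1) * (if e \in eta_s s then b else 1) *
  edge_kernel a b s s' e (e \in w) c.
under eq_bigr => wd _ do rewrite /joint_weight spin_weightE -big_split /=.
rewrite (sum_subsets_prod g) /spin_fits disjoint_indicatorE -big_split.
apply: eq_bigr => e _; rewrite /g /edge_kernel /=.
case: (e \in eta_s' s'); case: (e \in eta_s s); case: (e \in w); case: (a + b <= 1) => /=;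
  rewrite ?mul0r ?mul1r ?mulr1 ?mulr0 ?addr0 ?add0r //; ring.
Qed.

Lemma Exp_given_omega (Fs : {ffun V -> Q} -> R) (M : {set E} -> R) :
  (forall w, \sum_s spin_fits s w * Fs s = (\sum_s spin_fits s w) * M w) ->
  Exp (fun s _ => Fs s) = Exp (fun _ w => M w).
Proof.
move=> FM; rewrite /Defs.Exp; congr (_ / _).
have marginal (F : {ffun V -> Q} -> {set E} -> R) :
    \sum_s \sum_(s' : {ffun U -> Q'}) \sum_(w : {set E}) \sum_(wd : {set E})
      joint_weight a b s s' w wd * F s w
    = \sum_(s' : {ffun U -> Q'}) \sum_(w : {set E})
      omega_weight s' w * \sum_s spin_fits s w * F s w.
  transitivity (\sum_s \sum_(s' : {ffun U -> Q'}) \sum_(w : {set E})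
                  spin_fits s w * omega_weight s' w * F s w).
    by do 3!(apply: eq_bigr => ? _); rewrite -mulr_suml sum_dual_joint_weight.
  rewrite exchange_big; apply: eq_bigr => s' _; rewrite exchange_big; apply: eq_bigr => w _.
  by rewrite mulr_sumr; apply: eq_bigr => s _; rewrite mulrA [_ * omega_weight _ _]mulrC.
rewrite !marginal; apply: eq_bigr => s' _; apply: eq_bigr => w _.
by rewrite FM -mulr_suml.
Qed.

Lemma eq_Exp (F1 F2 : {ffun V -> Q} -> {set E} -> R) :
  (forall s w, F1 s w = F2 s w) -> Exp F1 = Exp F2.
Proof.
by move=> F12; rewrite /Defs.Exp; congr (_ / _); do 4!(apply: eq_bigr => ? _); rewrite F12.
Qed.

Lemma Exp_sum (I : finType) (P : pred I) (F : I -> {ffun V -> Q} -> {set E} -> R) :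
  Exp (fun s w => \sum_(j | P j) F j s w) = \sum_(j | P j) Exp (F j).
Proof.
rewrite /Defs.Exp -mulr_suml; congr (_ / _); symmetry.
by do 4!(rewrite exchange_big; apply: eq_bigr => ? _); rewrite mulr_sumr.
Qed.

Lemma Exp_mulr (F : {ffun V -> Q} -> {set E} -> R) (c : R) :
  Exp (fun s w => F s w * c) = Exp F * c.
Proof.
rewrite /Defs.Exp mulrAC; congr (_ / _).
by do 4!(rewrite mulr_suml; apply: eq_bigr => ? _); rewrite mulrA.
Qed.

Definition cluster_exponent w k (v : 'I_k -> V) (r : 'I_k -> nat) x : nat :=
  \sum_(i < k | cluster_root w (v i) == x) r i.

Lemma sum_fits_powers (q0 : Q) w k (v : 'I_k -> V) (r : 'I_k -> nat) :
  \sum_s spin_fits s w * \prod_(i < k) val (s (v i)) ^+ r i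
  = \prod_(x | cluster_root w x == x) \sum_(q : Q) val q ^+ cluster_exponent w v r x.
Proof.
rewrite -(sum_ffun_retract q0 (fun x q => val q ^+ cluster_exponent w v r x)
            (cluster_root_idem w)).
rewrite [RHS]big_mkcond; apply: eq_bigr => s _.
rewrite /spin_fits disjoint_eta_sE; case: ifP => [/forallP sS | _]; last by rewrite mul0r.
rewrite mul1r (partition_big (fun i => cluster_root w (v i)) [pred x | cluster_root w x == x]) /=.
  apply: eq_bigr => x _; rewrite -prodrXr; apply: eq_bigr => i /eqP <-.
  by rewrite (eqP (sS (v i))).
by move=> i _; rewrite cluster_root_idem.
Qed.

Hypothesis Q_gt0 : (0 < #|{: Q}|)%N.
Hypothesis QN : forall x : R, x \in Q -> - x \in Q.

Lemma moment_sum n : \sum_(q : Q) val q ^+ n = #|{: Q}|%:R * moment Q n.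
Proof. by rewrite /moment mulrC divfK // pnatr_eq0 -lt0n. Qed.

Lemma moment0 : moment Q 0 = 1.
Proof.
rewrite /moment (eq_bigr (fun _ => 1)) // sumr_const.
by rewrite mulfV // pnatr_eq0 -lt0n.
Qed.

Lemma moment_odd n : odd n -> moment Q n = 0.
Proof.
move=> odd_n; rewrite /moment.
suff -> : \sum_(q : Q) val q ^+ n = 0 by rewrite mul0r.
pose opp (q : Q) : Q := FSetSub (QN (valP q)).
have oppK : involutive opp by move=> q; apply: val_inj; rewrite /= opprK.
have sumN : \sum_(q : Q) val q ^+ n = - \sum_(q : Q) val q ^+ n.
  rewrite {1}(reindex_inj (can_inj oppK)) -sumrN; apply: eq_bigr => q _.
  by rewrite /= exprNn -signr_odd odd_n expr1 mulN1r.
by move/eqP: sumN; rewrite -addr_eq0 -mulr2n mulrn_eq0 /= => /eqP.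
Qed.

Lemma sum_fits_moments w k (v : 'I_k -> V) (r : 'I_k -> nat) :
  \sum_s spin_fits s w * \prod_(i < k) val (s (v i)) ^+ r i
  = (\sum_s spin_fits s w) *
    \prod_(x | cluster_root w x == x) moment Q (cluster_exponent w v r x).
Proof.
have /card_gt0P[q0 _] := Q_gt0.
have fitsE : \sum_s spin_fits s w = \prod_(x | cluster_root w x == x) #|{: Q}|%:R.
  transitivity (\sum_s spin_fits s w * \prod_(i < k) val (s (v i)) ^+ 0).
    by apply: eq_bigr => s _; rewrite big1 ?mulr1.
  rewrite (sum_fits_powers q0); apply: eq_bigr => x _.
  by rewrite (eq_bigr (fun _ => 1)) ?sumr_const // => q _; rewrite /cluster_exponent big1.
rewrite (sum_fits_powers q0) fitsE -big_split /=; apply: eq_bigr => x _.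
exact: moment_sum.
Qed.

Lemma cluster_moments_partition w k (v : 'I_k -> V) (r : 'I_k -> nat) :
  \prod_(x | cluster_root w x == x) moment Q (cluster_exponent w v r x)
  = \prod_(B in cluster_partition w [set v i | i : 'I_k])
      moment Q (\sum_(i < k | v i \in B) r i).
Proof.
set A := [set v i | i : 'I_k]; set S := cluster_root w @: A.
have vA i : v i \in A by apply: imset_f.
pose block y := [set x in A | same_cluster w y x].
have block_root y : block (cluster_root w y) = block y.
  apply/setP => x; rewrite !inE; congr (_ && _).
  by apply/same_clusterP/same_clusterP; rewrite cluster_root_idem.
have -> : cluster_partition w A = block @: S.
  by rewrite -imset_comp; apply: eq_imset => y; rewrite /= block_root.
rewrite big_imset /=; last first.
  move=> _ _ /imsetP[y1 Ay1 ->] /imsetP[y2 Ay2 ->] /setP/(_ y1).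
  by rewrite !block_root !inE Ay1 same_cluster_refl => /esym/same_clusterP ->.
rewrite (bigID (fun x => x \in S)) /= [X in _ * X]big1 ?mulr1; last first.
  move=> x /andP[_ xS]; rewrite (_ : cluster_exponent _ _ _ _ = 0%N) ?moment0 //.
  by apply: big1 => i /eqP ix; case/negP: xS; rewrite -ix imset_f.
apply: eq_big => [x | x /andP[_ /imsetP[y Ay ->]]].
  apply/andP/idP => [[]//|xS]; split=> //.
  by case/imsetP: xS => y _ ->; apply/eqP/cluster_root_idem.
congr (moment Q _); apply: eq_bigl => i; rewrite block_root inE vA /=.
by apply/eqP/same_clusterP => ->.
Qed.

Lemma sum_even_partitions w k (v : 'I_k -> V) (r : 'I_k -> nat) :
  \sum_(P : {set {set V}} | partition P [set v i | i : 'I_k] &&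
                            [forall B in P, ~~ odd (\sum_(i < k | v i \in B) r i)])
     (if cluster_partition w [set v i | i : 'I_k] == P then 1 else 0)
       * \prod_(B in P) moment Q (\sum_(i < k | v i \in B) r i)
  = \prod_(B in cluster_partition w [set v i | i : 'I_k])
      moment Q (\sum_(i < k | v i \in B) r i).
Proof.
set A := [set v i | i : 'I_k]; set pi := cluster_partition w A.
have [pi_even | pi_odd] :=
  boolP [forall B in pi, ~~ odd (\sum_(i < k | v i \in B) r i)].
  rewrite (bigD1 pi) /=; last by rewrite cluster_partitionP.
  rewrite eqxx mul1r [X in _ + X]big1 ?addr0 // => P /andP[_ /negbTE].
  by rewrite eq_sym => ->; rewrite mul0r.
rewrite big1 => [|P /andP[_ P_even]]; last first.
  by case: eqP => [pi_P | _]; [case/negP: pi_odd; rewrite pi_P | rewrite mul0r].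
move: pi_odd; rewrite negb_forall => /existsP[B]; rewrite negb_imply negbK => /andP[piB B_odd].
by rewrite (bigD1 B) //= moment_odd // mul0r.
Qed.

Lemma two_point_cluster_moments w (v1 v2 : V) :
  let v (i : 'I_2) := if val i == 0%N then v1 else v2 in
  \prod_(x | cluster_root w x == x) moment Q (cluster_exponent w v (fun _ => 1%N) x)
  = (if same_cluster w v1 v2 then 1 else 0) * moment Q 2.
Proof.
move=> v; have expE x : cluster_exponent w v (fun _ => 1%N) x
    = ((cluster_root w v1 == x) + (cluster_root w v2 == x))%N.
  by rewrite /cluster_exponent big_mkcond /= !big_ord_recl big_ord0 /=; do 2 case: ifP.
rewrite (bigD1 (cluster_root w v1)) ?cluster_root_idem //= expE eqxx.
have [/same_clusterP v12 | /same_clusterP v12] := boolP (same_cluster w v1 v2).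
  rewrite -v12 eqxx mul1r big1 ?mulr1 // => x /andP[_ /negbTE x1].
  by rewrite expE -v12 eq_sym x1 moment0.
have -> : (cluster_root w v2 == cluster_root w v1) = false.
  by rewrite eq_sym; apply/negbTE/eqP.
by rewrite moment_odd // !mul0r.
Qed.

End SpinsGivenClusters.

Unset Implicit Arguments.

Theorem proposition5p1 (R : realType) (G : cmap) (Q : {fset R}) (Q' : {fset R[i]})
    (a b : R) :
  (0 < #|{: Q}|)%N -> (0 < #|{: Q'}|)%N ->
  (forall x : R, x \in Q -> - x \in Q) ->
  (forall z : R[i], z \in Q' -> - z \in Q') ->
  0 < a <= 1 -> 0 < b <= 1 ->
  (forall (k : nat) (v : 'I_k -> vtx G) (r : 'I_k -> nat),
     injective v ->
     Exp G Q Q' a b (fun s _ => \prod_(i < k) (val (s (v i))) ^+ r i)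
     = \sum_(P : {set {set vtx G}} |
               partition P [set v i | i : 'I_k] &&
               [forall B in P, ~~ odd (\sum_(i < k | v i \in B) r i)])
         Prob G Q Q' a b (fun _ w => cluster_partition w [set v i | i : 'I_k] == P)
         * \prod_(B in P) moment Q (\sum_(i < k | v i \in B) r i))
  /\
  (forall v1 v2 : vtx G, v1 != v2 ->
     Exp G Q Q' a b (fun s _ => val (s v1) * val (s v2))
     = moment Q 2 * Prob G Q Q' a b (fun _ w => same_cluster w v1 v2)).
Proof.
move=> Q_gt0 _ QN _ _ _.
have Exp_powers k (v : 'I_k -> vtx G) (r : 'I_k -> nat) :
    Exp G Q Q' a b (fun s _ => \prod_(i < k) val (s (v i)) ^+ r i) =
    Exp G Q Q' a b (fun _ w =>
      \prod_(x | cluster_root w x == x) moment Q (cluster_exponent w v r x)).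
  by apply: Exp_given_omega => w; apply: sum_fits_moments.
split=> [k v r _ | v1 v2 _].
  under [RHS]eq_bigr => P _ do rewrite -Exp_mulr.
  rewrite Exp_powers -Exp_sum; apply: eq_Exp => _ w.
  by rewrite sum_even_partitions // cluster_moments_partition.
pose v (i : 'I_2) := if val i == 0%N then v1 else v2.
transitivity (Exp G Q Q' a b (fun s _ => \prod_(i < 2) val (s (v i)) ^+ 1)).
  by apply: eq_Exp => s _; rewrite !big_ord_recl big_ord0 mulr1.
rewrite Exp_powers mulrC -Exp_mulr; apply: eq_Exp => _ w.
exact: two_point_cluster_moments.
Qed.
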